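(* Let $r\geq 1$ and let $\mathbf a=(a_1,\ldots,a_r)$ be positive integers. Write the partial fraction decomposition $$\frac{1}{(1-z^{a_1})\cdots(1-z^{a_r})}=\sum_{\lambda}\sum_{\ell=1}^{m(\lambda)}\frac{c_{\lambda,\ell}}{(\lambda-z)^{\ell}},$$ where $\lambda$ ranges over the distinct roots of the denominator and $m(\lambda)$ is the multiplicity of $\lambda$ as a root. Then for $1\leq m\leq r$, $c_m:=c_{1,m}$ satisfies $$c_m = \frac{(-1)^{r-m}(m-1)!}{a_1\cdots a_r} \sum_{\ell=m}^r \frac{\left\{ {\ell \atop m}\right\}} {(\ell-1)!} \sum_{i_1+\cdots+i_r=r-\ell}\frac{B_{i_1}\cdots B_{i_r}}{i_1!\cdots i_r!}a_1^{i_1} \cdots a_r^{i_r},$$ where the inner sum runs over tuples of nonnegative integers $(i_1,\ldots,i_r)$.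
   Context: $B_\ell$ are the Bernoulli numbers defined by $\frac{t}{e^t-1}=\sum_{\ell\geq0}B_\ell\frac{t^\ell}{\ell!}$. $\left\{ {\ell \atop m}\right\}$ denotes the Stirling number of the second kind. *)

From HB Require Import structures.
From mathcomp Require Import all_boot all_order all_algebra all_field.
Set Implicit Arguments. Unset Strict Implicit. Unset Printing Implicit Defensive.
Import Order.TTheory GRing.Theory Num.Theory.
Local Open Scope ring_scope.

Fixpoint stirling2 (n k : nat) : nat :=
  match n, k with
  | 0, 0 => 1
  | 0, _.+1 => 0
  | _.+1, 0 => 0
  | n'.+1, k'.+1 => k'.+1 * stirling2 n' k + stirling2 n' k'
  end.

(* Bernoulli numbers, defined by t/(e^t-1) = sum_l B_l t^l / l!.
   Since t/(e^t-1) is the multiplicative inverse of the formal power series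
   (e^t-1)/t = sum_k t^k/(k+1)!, the coefficients b_l = B_l/l! are determined by
   the Cauchy-product identity  sum_{k=0}^n b_k / (n-k+1)! = [n == 0],
   i.e. b_0 = 1 and b_n = - sum_{k<n} b_k/(n-k+1)!  for n >= 1.
   bern_seq n lists B_0, ..., B_n. *)
Fixpoint bern_seq (n : nat) : seq algC :=
  match n with
  | 0 => [:: 1]
  | n'.+1 =>
      let s := bern_seq n' in
      rcons s (- (n`!)%:R *
               \sum_(k < n) (s`_k / (k`!)%:R / (((n - k).+1)`!)%:R))
  end.

Definition bernoulli (n : nat) : algC := (bern_seq n)`_n.

Definition denom_poly (r : nat) (a : 'I_r -> nat) : {poly algC} :=
  \prod_(j < r) (1 - 'X^(a j)).

(* Substituting z = e^(-t) turns the Laurent expansion of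
   1/((1 - z^a_1) ... (1 - z^a_r)) at z = 1 into a Laurent series in t.
   Multiplying the partial fraction decomposition by the denominator shows that
   (1 - z)^r sum_l c_l/(1 - z)^l times prod_j (1 + z + ... + z^(a_j - 1)) is 1
   modulo (z - 1)^r.  After the substitution, with U = 1 - e^(-t) = t V, this says
   that (prod_j a_j) sum_l c_l t^(r-l) V^(-l) agrees modulo t^r with
   prod_j a_j t/(1 - e^(-a_j t)), the product of the Bernoulli generating
   functions sum_i B_i (-a_j t)^i/i!.  The coefficient c_m is then isolated by the
   residue pairing Res(U' U^(m-1) U^(-l)) = [l = m], and the coefficients of
   U' U^(m-1) = (U^m)'/m come from (e^t - 1)^m/m! = sum_n S(n, m) t^n/n!.
   Power series are handled as polynomials compared modulo a power of 'X. *)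

From Stdlib Require Import Setoid Morphisms.
From HB Require Import structures.
From mathcomp Require Import all_boot all_order all_algebra all_field.
From mathcomp Require Import zify ring.
Set Implicit Arguments.
Unset Strict Implicit.
Unset Printing Implicit Defensive.
Import Order.TTheory GRing.Theory Num.Theory.
Local Open Scope ring_scope.

Section CongruenceModXn.

Variable R : nzRingType.
Implicit Types (p q : {poly R}) (N : nat).

Definition eqmodX N p q := forall i, (i < N)%N -> p`_i = q`_i.

Lemma eqmodX_equiv N : Equivalence (eqmodX N).
Proof.
split=> [p | p q pq i ltiN | p q s pq qs i ltiN] //.
- by rewrite pq.
- by rewrite pq ?qs.
Qed.

Lemma eq_eqmodX N p q : p = q -> eqmodX N p q.
Proof. by move->. Qed.

Lemma eqmodX_le M N p q : (M <= N)%N -> eqmodX N p q -> eqmodX M p q.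
Proof. by move=> leMN pq i ltiM; rewrite pq // (leq_trans ltiM). Qed.

Lemma eqmodXD N : Proper (eqmodX N ==> eqmodX N ==> eqmodX N) +%R.
Proof. by move=> p p' pp' q q' qq' i ltiN; rewrite !coefD pp' ?qq'. Qed.

Lemma eqmodXN N : Proper (eqmodX N ==> eqmodX N) (@GRing.opp {poly R}).
Proof. by move=> p p' pp' i ltiN; rewrite !coefN pp'. Qed.

Lemma eqmodXM N : Proper (eqmodX N ==> eqmodX N ==> eqmodX N) *%R.
Proof.
move=> p p' pp' q q' qq' i ltiN; rewrite !coefM; apply: eq_bigr => j _.
by rewrite pp' ?qq' // (leq_ltn_trans _ ltiN) // ?leq_subr // -ltnS.
Qed.

Lemma eqmodXZ N : Proper (eq ==> eqmodX N ==> eqmodX N) (@GRing.scale R {poly R}).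
Proof. by move=> c _ <- p p' pp' i ltiN; rewrite !coefZ pp'. Qed.

Lemma eqmodXMn N : Proper (eqmodX N ==> eq ==> eqmodX N) (@GRing.natmul {poly R}).
Proof. by move=> p p' pp' k _ <- i ltiN; rewrite !coefMn pp'. Qed.

Lemma eqmodXX N : Proper (eqmodX N ==> eq ==> eqmodX N) (@GRing.exp {poly R}).
Proof.
move=> p p' pp' k _ <-; elim: k => [|k IHk]; first by rewrite !expr0.
by rewrite !exprS; apply: eqmodXM.
Qed.

Lemma eqmodX_sum N I (s : seq I) (P : pred I) (F G : I -> {poly R}) :
  (forall i, P i -> eqmodX N (F i) (G i)) ->
  eqmodX N (\sum_(i <- s | P i) F i) (\sum_(i <- s | P i) G i).
Proof.
by move=> FG; elim/big_rec2: _ => [|i p q Pi pq]; [|apply: eqmodXD; [apply: FG|]].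
Qed.

Lemma eqmodX_prod N I (s : seq I) (F G : I -> {poly R}) :
  (forall i, eqmodX N (F i) (G i)) ->
  eqmodX N (\prod_(i <- s) F i) (\prod_(i <- s) G i).
Proof. by move=> FG; elim/big_rec2: _ => [|i p q _ pq] //; apply: eqmodXM. Qed.

Lemma eqmodX_deriv N p q : eqmodX N.+1 p q -> eqmodX N p^`() q^`().
Proof. by move=> pq i ltiN; rewrite !coef_deriv pq. Qed.

Lemma eqmodX_mulXK N p q : eqmodX N.+1 ('X * p) ('X * q) -> eqmodX N p q.
Proof. by move=> pq i ltiN; have := pq i.+1 ltiN; rewrite !coefXM. Qed.

Lemma eqmodX0M M N p q :
  eqmodX M p 0 -> eqmodX N q 0 -> eqmodX (M + N) (p * q) 0.
Proof.
move=> p0 q0 i ltiMN; rewrite coef0 coefM big1 // => j _.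
have [ltjM | lejM] := ltnP j M; first by rewrite p0 // coef0 mul0r.
by rewrite q0 ?coef0 ?mulr0 //; have := ltn_ord j; lia.
Qed.

Lemma eqmodX0X N q : eqmodX 1 q 0 -> eqmodX N (q ^+ N) 0.
Proof.
move=> q0; elim: N => [|N IHN]; first by move=> i.
by rewrite exprS -add1n; apply: eqmodX0M.
Qed.

End CongruenceModXn.

#[global] Existing Instance eqmodX_equiv.
#[global] Existing Instances eqmodXD eqmodXN eqmodXM eqmodXZ eqmodXMn eqmodXX.

Definition inv_ser (R : nzRingType) N (p : {poly R}) : {poly R} := \sum_(k < N) (1 - p) ^+ k.

Lemma mul_inv_ser (R : nzRingType) N (p : {poly R}) :
  p`_0 = 1 -> eqmodX N (p * inv_ser N p) 1.
Proof.
move=> p0; have q0 : eqmodX 1 (1 - p) 0 by case=> // _; rewrite coefB coef1 p0 subrr coef0.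
have -> : p * inv_ser N p = - (1 - p - 1) * inv_ser N p by rewrite addrAC subrr add0r opprK.
by rewrite mulNr -subrX1 opprB (eqmodX0X q0) subr0.
Qed.

Section ExponentialSeries.

Variable R : numFieldType.
Implicit Types (x y : R) (N : nat).

Lemma natr_fact_neq0 n : (n`!)%:R != 0 :> R.
Proof. by rewrite pnatr_eq0 -lt0n fact_gt0. Qed.

(* [exp_ser N x] and [expm1_ser N x] are e^(xt) and (e^(xt) - 1)/(xt) truncated at degree N. *)
Definition exp_ser N x : {poly R} := \poly_(k < N) (x ^+ k / (k`!)%:R).
Definition expm1_ser N x : {poly R} := \poly_(k < N) (x ^+ k / (k.+1`!)%:R).

Lemma exp_serD N x y : eqmodX N (exp_ser N x * exp_ser N y) (exp_ser N (x + y)).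
Proof.
move=> i ltiN; rewrite coefM coef_poly ltiN addrC exprDn mulr_suml.
apply: eq_bigr => -[j /= ltji] _; rewrite ltnS in ltji.
rewrite !coef_poly (leq_ltn_trans ltji ltiN) (leq_ltn_trans (leq_subr j i) ltiN).
have fact_bin : (i`!)%:R = ('C(i, j) * (j`! * (i - j)`!))%:R :> R by rewrite bin_fact.
rewrite -mulr_natr fact_bin !natrM.
have := natr_fact_neq0 j; have := natr_fact_neq0 (i - j).
have : ('C(i, j))%:R != 0 :> R by rewrite pnatr_eq0 -lt0n bin_gt0.
by move=> *; field; apply/and3P.
Qed.

Lemma exp_ser0 N : eqmodX N (exp_ser N 0) 1.
Proof.
move=> i ltiN; rewrite coef_poly ltiN coef1.
by case: i {ltiN} => [|i]; rewrite ?expr0 ?divr1 // expr0n mul0r.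
Qed.

Lemma exp_serMn N x k : eqmodX N (exp_ser N x ^+ k) (exp_ser N (x *+ k)).
Proof.
elim: k => [|k IHk]; first by rewrite expr0 mulr0n exp_ser0.
by rewrite exprS IHk exp_serD -mulrS.
Qed.

Lemma exp_ser_sub1 N x : eqmodX N (exp_ser N x - 1) (x *: ('X * expm1_ser N x)).
Proof.
move=> [|i] ltiN; rewrite coefB coef1 coef_poly ltiN coefZ coefXM.
  by rewrite expr0 divr1 subrr mulr0.
by rewrite coef_poly ltnW // subr0 exprS mulrA.
Qed.

Lemma deriv_exp_ser N x : eqmodX N (exp_ser N.+1 x)^`() (x *: exp_ser N.+1 x).
Proof.
move=> i ltiN; rewrite coef_deriv coefZ !coef_poly !ltnS ltiN (ltnW ltiN) exprS factS.
rewrite natrM -[_ *+ i.+1]mulr_natr; field.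
by rewrite natr_fact_neq0 nat1r pnatr_eq0.
Qed.

Lemma deriv_exp_ser_sub1X N x m : let Q := exp_ser N.+1 x - 1 in
  eqmodX N (Q ^+ m.+1)^`() ((x *+ m.+1) *: (Q ^+ m.+1 + Q ^+ m)).
Proof.
move=> Q; rewrite deriv_exp derivB derivC subr0 deriv_exp_ser.
have -> : exp_ser N.+1 x = Q + 1 by rewrite addrNK.
by rewrite -scalerAl mulrDl mul1r -exprS scalerMnl.
Qed.

Lemma coef_exp_ser_sub1X N x m p : (p <= N)%N ->
  ((exp_ser N.+1 x - 1) ^+ m)`_p * (p`!)%:R = x ^+ p * (m`!)%:R * (stirling2 p m)%:R.
Proof.
elim: p m => [|p IHp] m lepN.
  rewrite -horner_coef0 horner_exp hornerD hornerN hornerC horner_coef0 coef_poly.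
  by case: m => [|m]; rewrite /= ?expr0 ?divr1 ?subrr ?expr0n ?mul0r ?mulr1 ?mulr0.
case: m => [|m]; first by rewrite expr0 coef1 mul0r /= mulr0.
set Q := exp_ser N.+1 x - 1.
have -> : (Q ^+ m.+1)`_p.+1 * (p.+1`!)%:R = ((Q ^+ m.+1)^`())`_p * (p`!)%:R.
  by rewrite coef_deriv factS natrM mulrA [_ * p.+1%:R]mulr_natr.
rewrite (deriv_exp_ser_sub1X x m lepN) coefZ coefD mulrDr mulrDl.
rewrite -[_ * _ * p`!%:R]mulrA -[_ * _ * p`!%:R]mulrA.
rewrite (IHp m.+1 (ltnW lepN)) (IHp m (ltnW lepN)).
rewrite -[x *+ _]mulr_natr [stirling2 p.+1 _]/= factS !natrD !natrM exprS; ring.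
Qed.

End ExponentialSeries.

Lemma coef_deriv_mul_exp (R : comNzRingType) (q : {poly R}) m p :
  (q^`() * q ^+ m)`_p *+ m.+1 = (q ^+ m.+1)`_p.+1 *+ p.+1.
Proof. by rewrite -coef_deriv deriv_exp coefMn. Qed.

Lemma coef_deriv_mul_inv_exp (R : numFieldType) (V W : {poly R}) N k :
  eqmodX N.+1 (V * W) 1 -> (k < N)%N -> (V^`() * W ^+ k.+2)`_k = - (W ^+ k.+1)`_k.+1.
Proof.
move=> VW1 ltkN; have VW := eqmodX_le (leqnSn N) VW1.
have dVW : eqmodX N (V^`() * W + V * W^`()) 0.
  by rewrite -derivM (eqmodX_deriv VW1) -polyC1 derivC.
have -> : (V^`() * W ^+ k.+2)`_k = - (W^`() * W ^+ k)`_k.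
  rewrite -coefN; apply: (_ : eqmodX N _ _) ltkN.
  have -> : V^`() * W ^+ k.+2 =
            (V^`() * W + V * W^`()) * W ^+ k.+1 - V * W * (W^`() * W ^+ k).
    by rewrite !exprS; ring.
  by rewrite dVW VW mul0r mul1r sub0r.
have Sk_neq0 : k.+1%:R != 0 :> R by rewrite pnatr_eq0.
by congr (- _); apply: (mulIf Sk_neq0); rewrite !mulr_natr coef_deriv_mul_exp.
Qed.

(* For [U = tV] and [W = 1/V], the coefficient below is the residue of [U' U^(m-l-1)]. *)
Lemma coef_residue (R : numFieldType) (U V W : {poly R}) N m l :
  eqmodX N.+1 U ('X * V) -> eqmodX N.+1 (V * W) 1 -> (l < N)%N ->
  (U^`() * U ^+ m * W ^+ l.+1)`_l = (m == l)%:R.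
Proof.
move=> UV VW1 ltlN; have VW := eqmodX_le (leqnSn N) VW1.
have dU : eqmodX N U^`() (V + 'X * V^`()).
  by rewrite (eqmodX_deriv UV) derivM derivX mul1r.
have UmV : eqmodX N (U ^+ m) ('X^m * V ^+ m).
  by rewrite (eqmodX_le (leqnSn N) UV) exprMn.
have key : eqmodX N (U^`() * U ^+ m * W ^+ l.+1)
                    ('X^m * (V ^+ m * W ^+ l.+1 * (V + 'X * V^`()))).
  by rewrite dU UmV; apply: eq_eqmodX; ring.
rewrite (key l ltlN) coefXnM; have [ltlm | /subnKC lm] := ltnP l m.
  by case: eqP ltlm => // ->; rewrite ltnn.
move: (l - m)%N lm ltlN => j <- ltmjN.
have -> : V ^+ m * W ^+ (m + j).+1 * (V + 'X * V^`()) =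
          (V * W) ^+ m * (W ^+ j * (V * W) + 'X * (V^`() * W ^+ j.+1)).
  by rewrite -addnS exprD !exprS exprMn; ring.
have ltjN : (j < N)%N by apply: leq_ltn_trans ltmjN; apply: leq_addl.
have -> : ((V * W) ^+ m * (W ^+ j * (V * W) + 'X * (V^`() * W ^+ j.+1)))`_j =
          (W ^+ j + 'X * (V^`() * W ^+ j.+1))`_j.
  by apply: (_ : eqmodX N _ _) ltjN; rewrite VW expr1n mul1r mulr1.
rewrite coefD coefXM; case: j ltmjN ltjN => [|k] _ ltkN.
  by rewrite addn0 expr0 coef1 !eqxx addr0.
rewrite /= (coef_deriv_mul_inv_exp VW1 (ltnW ltkN)) subrr.
by rewrite -{1}(addn0 m) eqn_add2l.
Qed.

Lemma coef_prod (R : comNzRingType) r (F : 'I_r -> {poly R}) n :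
  (\prod_(j < r) F j)`_n =
  \sum_(f : {ffun 'I_r -> 'I_n.+1} | (\sum_(j < r) (f j : nat) == n)%N)
     \prod_(j < r) (F j)`_(f j).
Proof.
have -> : (\prod_(j < r) F j)`_n = (\prod_(j < r) \poly_(k < n.+1) (F j)`_k)`_n.
  by apply: (_ : eqmodX n.+1 _ _) => //; apply: eqmodX_prod => j k ltkn; rewrite coef_poly ltkn.
under eq_bigr do rewrite poly_def.
rewrite bigA_distr_bigA coef_sum [RHS]big_mkcond; apply: eq_bigr => f _ /=.
rewrite (eq_bigr (fun j => ((F j)`_(f j))%:P * 'X^(f j))) => [|j _]; last by rewrite mul_polyC.
rewrite big_split /= -rmorph_prod prodrXr coefCM coefXn eq_sym.
by case: eqP; rewrite ?mulr1 ?mulr0.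
Qed.

Lemma size_bern_seq n : size (bern_seq n) = n.+1.
Proof. by elim: n => //= n IHn; rewrite size_rcons IHn. Qed.

Lemma nth_bern_seq n k : (k <= n)%N -> (bern_seq n)`_k = bernoulli k.
Proof.
elim: n => [|n IHn]; first by rewrite leqn0 => /eqP ->.
rewrite leq_eqVlt => /predU1P [-> //| ltkn].
by rewrite /= nth_rcons size_bern_seq ltkn IHn.
Qed.

Lemma bernoulli_rec n :
  \sum_(k < n.+1) bernoulli k / (k`!)%:R / ((n - k).+1`!)%:R = (n == 0)%:R.
Proof.
case: n => [|n]; first by rewrite big_ord1 /bernoulli /= !divr1.
rewrite big_ord_recr /= subnn divr1 {2}/bernoulli /= nth_rcons size_bern_seq ltnn eqxx.
set S := \sum_(k < n.+1) _; set T := \sum_(k < n.+1) _.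
have -> : T = S.
  by apply: eq_bigr => k _; rewrite nth_bern_seq // -ltnS.
by rewrite mulNr [_ * S]mulrC mulNr mulfK ?natr_fact_neq0 // addrN.
Qed.

(* [bern_ser N x] is x t/(e^(x t) - 1) truncated at degree N. *)
Definition bern_ser N (x : algC) : {poly algC} :=
  \poly_(k < N) (bernoulli k * x ^+ k / (k`!)%:R).

Lemma bern_ser_expm1 N x : eqmodX N (bern_ser N x * expm1_ser N x) 1.
Proof.
move=> i ltiN; rewrite coefM coef1.
transitivity (x ^+ i * \sum_(k < i.+1) bernoulli k / (k`!)%:R / ((i - k).+1`!)%:R).
  rewrite mulr_sumr; apply: eq_bigr => -[j /=]; rewrite ltnS => leji _.
  rewrite !coef_poly (leq_ltn_trans leji ltiN) (leq_ltn_trans (leq_subr j i) ltiN).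
  have -> : x ^+ i = x ^+ j * x ^+ (i - j) by rewrite -exprD subnKC.
  by field; rewrite !natr_fact_neq0.
by rewrite bernoulli_rec; case: i {ltiN} => [|i]; rewrite ?expr0 ?mulr1 ?mulr0.
Qed.

(* ((1 - e^(-t))/t) ((1 - e^(-n t))/(1 - e^(-t))) ((n t)/(1 - e^(-n t))) = n *)
Lemma expm1_geom_bern_ser N n :
  eqmodX N (expm1_ser N.+1 (-1) * (\sum_(k < n) exp_ser N.+1 (-1) ^+ k) *
            bern_ser N.+1 (- n%:R)) n%:R.
Proof.
set V := expm1_ser N.+1 (-1); set S := \sum_(k < n) _.
have VS : eqmodX N.+1 ('X * (V * S)) ('X * (n%:R *: expm1_ser N.+1 (- n%:R))).
  have : eqmodX N.+1 ((exp_ser N.+1 (-1) - 1) * S) (exp_ser N.+1 (- n%:R) - 1).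
    by rewrite -subrX1 exp_serMn mulNrn.
  by rewrite !exp_ser_sub1 scaleN1r mulNr mulrA scaleNr => /eqmodXN; rewrite !opprK -scalerAr.
rewrite (eqmodX_mulXK VS) -scalerAl mulrC.
by rewrite (eqmodX_le (leqnSn N) (bern_ser_expm1 _)) scaler_nat.
Qed.

Lemma coef_prod_bern_ser N r (a : 'I_r -> nat) n : (n < N)%N ->
  (\prod_(j < r) bern_ser N (- (a j)%:R))`_n = (-1) ^+ n *
   \sum_(f : {ffun 'I_r -> 'I_n.+1} | (\sum_(j < r) (f j : nat) == n)%N)
      \prod_(j < r) (bernoulli (f j) / ((f j)`!)%:R * (a j)%:R ^+ f j).
Proof.
move=> ltnN; rewrite coef_prod mulr_sumr; apply: eq_bigr => f /eqP sum_f.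
rewrite -[X in (-1) ^+ X]sum_f -prodrXr -big_split; apply: eq_bigr => j _ /=.
have ltfN : (f j < N)%N by apply: leq_ltn_trans ltnN; rewrite -ltnS.
by rewrite coef_poly ltfN (exprNn ((a j)%:R : algC)); ring.
Qed.

Lemma horner_eq0_poly (R : numDomainType) (p : {poly R}) :
  (forall x, p.[x] = 0) -> p = 0.
Proof.
move=> p0; apply: (@roots_geq_poly_eq0 _ p [seq i%:R | i <- iota 0 (size p)]).
- by apply/allP => x _; apply/rootP.
- by rewrite map_inj_uniq ?iota_uniq // => i j /eqP; rewrite eqr_nat => /eqP.
- by rewrite size_map size_iota.
Qed.

Lemma eqmodX_comp_dvdp (R : fieldType) (f E : {poly R}) (c : R) r :
  ('X - c%:P) ^+ r %| f -> eqmodX 1 E c%:P -> eqmodX r (f \Po E) 0.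
Proof.
rewrite dvdp_eq => /eqP -> Ec; rewrite comp_polyM rmorphXn rmorphB /= comp_polyX comp_polyC.
have Ec0 : eqmodX 1 (E - c%:P) 0 by rewrite Ec subrr.
by rewrite (eqmodX0X Ec0) mulr0.
Qed.

Lemma partial_fraction_numer (R : numFieldType) (D : {poly R}) (s : seq R) (c : R -> nat -> R) :
  D != 0 ->
  (forall z, ~~ root D z -> (D.[z])^-1 =
     \sum_(lam <- s) \sum_(1 <= l < (mup lam D).+1) c lam l / (lam - z) ^+ l) ->
  \sum_(lam <- s) \sum_(1 <= l < (mup lam D).+1)
     ((-1) ^+ l * c lam l) *: (D %/ ('X - lam%:P) ^+ l) = 1.
Proof.
move=> D_neq0 pfD; set P := \sum_(lam <- s) _.
have Pz z : ~~ root D z -> P.[z] = 1.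
  move=> Dz_neq0; rewrite -(mulfV Dz_neq0) pfD // big_distrr /= /P horner_sum.
  apply: eq_bigr => lam _; rewrite big_distrr horner_sum /=.
  apply: eq_big_nat => l /andP [l_gt0 lel].
  have dvdD : ('X - lam%:P) ^+ l %| D by rewrite -mup_geq.
  have z_neq_lam : z - lam != 0.
    rewrite subr_eq0; apply: contraNneq Dz_neq0 => ->.
    by rewrite -dvdp_XsubCl -(expr1 ('X - _)) -mup_geq // (leq_trans l_gt0 lel).
  have Dz : D.[z] = (D %/ ('X - lam%:P) ^+ l).[z] * (z - lam) ^+ l.
    by rewrite -{1}(divpK dvdD) hornerM horner_exp hornerXsubC.
  rewrite Dz hornerZ -[lam - z]opprB (exprNn (z - lam)) invfM -exprVn invrN1.
  by field; rewrite expf_neq0.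
apply/eqP; rewrite -subr_eq0; have : (P - 1) * D = 0.
  apply: horner_eq0_poly => z; rewrite hornerM.
  have [/rootP -> | /Pz Pz1] := boolP (root D z); first by rewrite mulr0.
  by rewrite hornerD hornerN Pz1 -polyC1 hornerC subrr mul0r.
by move/eqP; rewrite mulf_eq0 (negbTE D_neq0) orbF.
Qed.

Definition geom_prod r (a : 'I_r -> nat) : {poly algC} :=
  \prod_(j < r) \sum_(k < a j) 'X^k.

(* [(1 - z)^r] times the principal part [sum_l c_l / (1 - z)^l] at [z = 1]. *)
Definition principal_numer r (c : nat -> algC) : {poly algC} :=
  \sum_(1 <= l < r.+1) c l *: (1 - 'X) ^+ (r - l).

Section DenominatorAtOne.

Variables (r : nat) (a : 'I_r -> nat).
Hypothesis a_gt0 : forall j, (0 < a j)%N.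

Lemma denom_polyE : denom_poly a = geom_prod a * (1 - 'X) ^+ r.
Proof.
rewrite /denom_poly (eq_bigr (fun j => (\sum_(k < a j) 'X^k) * (1 - 'X))).
  by rewrite big_split prodr_const card_ord.
by move=> j _; rewrite -opprB subrX1 -mulNr opprB mulrC.
Qed.

Lemma geom_prod1 : (geom_prod a).[1] = \prod_(j < r) (a j)%:R.
Proof.
rewrite horner_prod; apply: eq_bigr => j _.
rewrite horner_sum (eq_bigr (fun=> 1)) ?sumr_const ?card_ord // => k _.
by rewrite hornerXn expr1n.
Qed.

Lemma prod_a_neq0 : \prod_(j < r) (a j)%:R != 0 :> algC.
Proof. by rewrite prodf_seq_neq0; apply/allP => j _; rewrite pnatr_eq0 -lt0n a_gt0. Qed.

Lemma denom_poly_neq0 : denom_poly a != 0.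
Proof.
rewrite denom_polyE mulf_neq0 ?expf_neq0 //.
  by apply: contra_neq prod_a_neq0 => ga0; rewrite -geom_prod1 ga0 horner0.
by rewrite -opprB oppr_eq0 -polyC1 polyXsubC_eq0.
Qed.

Lemma denom_polyXsubC : denom_poly a = ((-1) ^+ r * geom_prod a) * ('X - 1) ^+ r.
Proof. by rewrite denom_polyE -[1 - 'X]opprB (exprNn ('X - 1)) mulrCA mulrA. Qed.

Lemma mup_denom_poly1 : mup 1 (denom_poly a) = r.
Proof.
rewrite denom_polyXsubC -polyC1 mupMr ?mup_XsubCX ?eqxx //.
by rewrite /root hornerM geom_prod1 horner_exp hornerN hornerC mulf_neq0 ?prod_a_neq0 ?signr_eq0.
Qed.

Lemma divp_denom_poly1 l : (l <= r)%N ->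
  denom_poly a %/ ('X - 1) ^+ l = (-1) ^+ l *: (geom_prod a * (1 - 'X) ^+ (r - l)).
Proof.
move=> lelr; rewrite denom_polyE.
have -> : (1 - 'X) ^+ r = (1 - 'X) ^+ (r - l) * (- ('X - 1)) ^+ l :> {poly algC}.
  by rewrite opprB -exprD subnK.
rewrite (exprNn ('X - 1)) -(rmorph_sign polyC l) mul_polyC mulrA -scalerAr scalerAl.
by rewrite mulpK // expf_neq0 // -polyC1 polyXsubC_eq0.
Qed.

Lemma dvdp_divp_denom_poly lam l : lam != 1 -> (l <= mup lam (denom_poly a))%N ->
  ('X - 1) ^+ r %| denom_poly a %/ ('X - lam%:P) ^+ l.
Proof.
move=> lam_neq1 lel.
have dvd_lam : ('X - lam%:P) ^+ l %| denom_poly a by rewrite -mup_geq ?denom_poly_neq0.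
rewrite -(Gauss_dvdpl _ (_ : coprimep _ (('X - lam%:P) ^+ l))).
  by rewrite divpK // denom_polyXsubC dvdp_mull.
by rewrite coprimep_expl // coprimep_expr // -polyC1 coprimep_XsubC2 // subr_eq0.
Qed.

Lemma dvdp_principal_numer (s : seq algC) (c : algC -> nat -> algC) :
  uniq s -> 1 \in s ->
  (forall z, ~~ root (denom_poly a) z -> ((denom_poly a).[z])^-1 =
     \sum_(lam <- s) \sum_(1 <= l < (mup lam (denom_poly a)).+1) c lam l / (lam - z) ^+ l) ->
  ('X - 1) ^+ r %| 1 - geom_prod a * principal_numer r (c 1).
Proof.
move=> s_uniq s1 pfD; have := partial_fraction_numer denom_poly_neq0 pfD.
rewrite (bigD1_seq 1) //= mup_denom_poly1 -polyC1.
have -> : \sum_(1 <= l < r.+1) ((-1) ^+ l * c 1 l) *: (denom_poly a %/ ('X - 1%:P) ^+ l) =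
          geom_prod a * principal_numer r (c 1).
  rewrite /principal_numer mulr_sumr; apply: eq_big_nat => l /andP [_ lelr].
  by rewrite polyC1 divp_denom_poly1 // scalerA mulrAC -expr2 sqrr_sign mul1r scalerAr.
move=> pf1; rewrite -[X in _ %| X - _]pf1 addrAC subrr add0r polyC1.
pose dvd_by_root1 (p : {poly algC}) : Prop := ('X - 1) ^+ r %| p.
apply: (big_ind dvd_by_root1) => [|p q|lam lam_neq1]; [exact: dvdp0 | exact: dvdp_add |].
rewrite big_seq; apply: (big_ind dvd_by_root1) => [|p q|l]; [exact: dvdp0 | exact: dvdp_add |].
rewrite mem_index_iota => /andP [_ lel].
by rewrite /dvd_by_root1 -mul_polyC dvdp_mull // dvdp_divp_denom_poly.
Qed.

End DenominatorAtOne.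

Lemma stirling2_eq0 n k : (n < k)%N -> stirling2 n k = 0%N.
Proof. by elim: n k => [|n IHn] [|k] //= ltnk; rewrite !IHn ?muln0 // ltnW. Qed.

Lemma principal_numer_comp r c p :
  principal_numer r c \Po p = \sum_(1 <= l < r.+1) c l *: (1 - p) ^+ (r - l).
Proof.
rewrite rmorph_sum; apply: eq_bigr => l _.
by rewrite /= comp_polyZ rmorphXn rmorphB rmorph1 /= comp_polyX.
Qed.

Lemma geom_prod_comp r (a : 'I_r -> nat) p :
  geom_prod a \Po p = \prod_(j < r) \sum_(k < a j) p ^+ k.
Proof.
rewrite rmorph_prod; apply: eq_bigr => j _; rewrite rmorph_sum.
by apply: eq_bigr => k _; rewrite /= rmorphXn /= comp_polyX.
Qed.

Section PrincipalCoefficients.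

Variables (r : nat) (a : 'I_r -> nat) (c : nat -> algC).
Hypothesis a_gt0 : forall j, (0 < a j)%N.
Hypothesis dvd_principal : ('X - 1) ^+ r %| 1 - geom_prod a * principal_numer r c.

(* In the variable t: E = e^(-t), U = 1 - E = t V, W = 1/V, F and Q are
   [principal_numer r c] and [geom_prod a] at E, and H is the product of the
   a_j t/(1 - e^(-a_j t)) = sum_i B_i (-a_j t)^i/i!. *)
Local Notation N := r.+2.
Local Notation E := (exp_ser N (-1 : algC)).
Local Notation U := (1 - E).
Local Notation V := (expm1_ser N (-1 : algC)).
Local Notation W := (inv_ser N V).
Local Notation H := (\prod_(j < r) bern_ser N (- (a j)%:R)).
Local Notation F := (\sum_(1 <= l < r.+1) c l *: U ^+ (r - l)).
Local Notation Q := (\prod_(j < r) \sum_(k < a j) E ^+ k).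
Local Notation G := (\sum_(1 <= l < r.+1) c l *: ('X^(r - l) * W ^+ l)).
Local Notation PA := (\prod_(j < r) (a j)%:R).

Let U_XV : eqmodX N U ('X * V).
Proof. by rewrite -opprB exp_ser_sub1 scaleN1r opprK. Qed.

Let VW_1 : eqmodX N (V * W) 1.
Proof. by apply: mul_inv_ser; rewrite coef_poly /= expr0 divr1. Qed.

Let FQ_1 : eqmodX r (F * Q) 1.
Proof.
have E1 : eqmodX 1 E 1%:P by case=> // _; rewrite polyC1 coef1 coef_poly /= expr0 divr1.
have := dvd_principal; rewrite -[X in 'X - X]polyC1 => /eqmodX_comp_dvdp/(_ E1).
rewrite rmorphB rmorph1 rmorphM /= principal_numer_comp geom_prod_comp mulrC => FQ0.
by rewrite -(subKr 1 (F * Q)) FQ0 subr0.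
Qed.

Let VQH_PA : eqmodX r.+1 (V ^+ r * Q * H) PA.
Proof.
have := eqmodX_prod (index_enum 'I_r) (fun j => @expm1_geom_bern_ser r.+1 (a j)).
by rewrite !big_split /= prodr_const card_ord.
Qed.

Let WF_G : eqmodX r.+1 (W ^+ r * F) G.
Proof.
rewrite mulr_sumr big_nat [X in eqmodX _ _ X]big_nat; apply: eqmodX_sum => l /andP [_ lelr].
have -> : W ^+ r = W ^+ l * W ^+ (r - l) by rewrite -exprD subnKC.
rewrite -scalerAr (eqmodX_le (leqnSn _) U_XV) exprMn.
have -> : W ^+ l * W ^+ (r - l) * ('X ^+ (r - l) * V ^+ (r - l)) =
          'X^(r - l) * (W ^+ l * (V * W) ^+ (r - l)) by rewrite exprMn; ring.
by rewrite (eqmodX_le (leqnSn _) VW_1) expr1n mulr1.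
Qed.

Let PA_G_H : eqmodX r (PA * G) H.
Proof.
rewrite -(eqmodX_le (leqnSn r) VQH_PA) -(eqmodX_le (leqnSn r) WF_G).
have -> : V ^+ r * Q * H * (W ^+ r * F) = (V * W) ^+ r * (F * Q) * H by rewrite exprMn; ring.
by rewrite (eqmodX_le (leqW (leqnSn r)) VW_1) FQ_1 expr1n !mul1r.
Qed.

Let coef_principal m : (m < r)%N -> c m.+1 * PA = (U^`() * U ^+ m * H)`_r.-1.
Proof.
move=> ltmr; have ltr1r : (r.-1 < r)%N by rewrite prednK ?ltnn // (leq_ltn_trans _ ltmr).
have -> : (U^`() * U ^+ m * H)`_r.-1 = (U^`() * U ^+ m * (PA * G))`_r.-1.
  by apply: (_ : eqmodX r _ _) ltr1r; rewrite PA_G_H.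
rewrite mulrCA (eq_bigr (fun j => ((a j)%:R)%:P)) => [|j _]; last by rewrite polyC_natr.
rewrite -(rmorph_prod polyC) coefCM mulrC; congr (_ * _).
rewrite mulr_sumr coef_sum big_add1 /=.
transitivity (\sum_(0 <= l < r) c l.+1 * (m == l)%:R).
  rewrite (bigD1_seq m) ?mem_index_iota ?iota_uniq //= eqxx mulr1 big1 ?addr0 // => l.
  by rewrite eq_sym => /negbTE ->; rewrite mulr0.
apply: eq_big_nat => l /andP [_ ltlr].
rewrite -scalerAr coefZ mulrCA coefXnM.
have -> : (r.-1 < r - l.+1)%N = false by lia.
have -> : (r.-1 - (r - l.+1) = l)%N by lia.
by rewrite (coef_residue m U_XV VW_1 (ltnW ltlr)).
Qed.

Let coef_dU_Um m p : (p < r)%N ->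
  (U^`() * U ^+ m)`_p = (-1) ^+ (m + p) * (m`!)%:R * (stirling2 p.+1 m.+1)%:R / (p`!)%:R.
Proof.
move=> ltpr; have Sm_neq0 : m.+1%:R != 0 :> algC by rewrite pnatr_eq0.
apply: (mulIf Sm_neq0); rewrite [LHS]mulr_natr coef_deriv_mul_exp -mulr_natr.
have := @coef_exp_ser_sub1X algC r.+1 (-1) m.+1 p.+1 (ltnW ltpr).
rewrite -[1 - E]opprB -(scaleN1r (E - 1)) exprZn coefZ.
move: ((E - 1) ^+ m.+1)`_p.+1 => X hX.
have -> : X = (-1) ^+ p.+1 * (m.+1`!)%:R * (stirling2 p.+1 m.+1)%:R / (p.+1`!)%:R.
  by rewrite -hX mulfK ?natr_fact_neq0.
rewrite !factS !natrM exprD !exprS; field.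
by rewrite natr_fact_neq0 nat1r pnatr_eq0.
Qed.

Lemma principal_coefE m : (m < r)%N ->
  c m.+1 = (-1) ^+ (r - m.+1) * (m`!)%:R / PA *
    \sum_(m.+1 <= l < r.+1)
      ((stirling2 l m.+1)%:R / ((l.-1)`!)%:R *
       \sum_(i : {ffun 'I_r -> 'I_(r - l).+1} | (\sum_(j < r) (i j : nat) == r - l)%N)
         \prod_(j < r) (bernoulli (i j) / ((i j)`!)%:R * ((a j)%:R) ^+ (i j))).
Proof.
move=> ltmr; rewrite -[c m.+1](mulfK (prod_a_neq0 a_gt0)) coef_principal // coefM.
rewrite prednK ?(leq_ltn_trans _ ltmr) //.
rewrite -(big_mkord xpredT (fun j => (U^`() * U ^+ m)`_j * H`_(r.-1 - j))).
rewrite (@big_cat_nat _ _ _ m) ?(ltnW ltmr) //=.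
rewrite big_nat_cond big1 ?add0r => [|p /andP [/andP [_ ltpm] _]]; last first.
  by rewrite coef_dU_Um ?stirling2_eq0 ?(ltn_trans ltpm ltmr) // !(mulr0, mul0r).
rewrite [in RHS]big_add1 mulr_suml [RHS]mulr_sumr; apply: eq_big_nat => p /andP [lemp ltpr].
rewrite coef_dU_Um // coef_prod_bern_ser; last lia.
have -> : (r.-1 - p = r - p.+1)%N by lia.
have <- : (-1) ^+ (m + p) * (-1) ^+ (r - p.+1) = (-1) ^+ (r - m.+1) :> algC.
  rewrite -exprD; have -> : (m + p + (r - p.+1) = r - m.+1 + (m + m))%N by lia.
  by rewrite exprD [X in _ * X]exprD -exprMn mulrNN mulr1 expr1n mulr1.
by field; rewrite prod_a_neq0 ?natr_fact_neq0.
Qed.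

End PrincipalCoefficients.

Theorem proposition4p5
  (r : nat) (hr : (1 <= r)%N) (a : 'I_r -> nat) (ha : forall j, (0 < a j)%N)
  (s : seq algC) (s_uniq : uniq s)
  (s_roots : forall x : algC, (x \in s) = root (denom_poly a) x)
  (c : algC -> nat -> algC)
  (hpf : forall z : algC, ~~ root (denom_poly a) z ->
     ((denom_poly a).[z])^-1 =
       \sum_(lam <- s) \sum_(1 <= l < (mup lam (denom_poly a)).+1)
           c lam l / (lam - z) ^+ l)
  (m : nat) (hm1 : (1 <= m)%N) (hmr : (m <= r)%N) :
  c 1 m =
    (-1) ^+ (r - m) * ((m.-1)`!)%:R / (\prod_(j < r) (a j)%:R) *
    \sum_(m <= l < r.+1)
      ((stirling2 l m)%:R / ((l.-1)`!)%:R *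
       \sum_(i : {ffun 'I_r -> 'I_(r - l).+1} | (\sum_(j < r) (i j : nat) == r - l)%N)
         \prod_(j < r) (bernoulli (i j) / ((i j)`!)%:R * ((a j)%:R) ^+ (i j))).
Proof.
have root1 : root (denom_poly a) 1.
  apply/rootP; rewrite denom_polyXsubC hornerM horner_exp hornerXsubC subrr.
  by rewrite expr0n eqn0Ngt hr mulr0.
have s1 : 1 \in s by rewrite s_roots.
case: m hm1 hmr => // m _ ltmr.
exact: principal_coefE ha (dvdp_principal_numer ha s_uniq s1 hpf) m ltmr.
Qed.
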